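(* Let $\lambda,\mu,\theta>0$ with $\lambda\theta>2\mu$, $\alpha,\hat\alpha\in\mathbb{R}$, and consider for a small parameter $\epsilon$ and delay $\Delta>0$ the system $$\dot q_1(t) = \lambda\,\frac{\exp\big(-\theta q_1(t-\Delta)+(\alpha+\epsilon\hat\alpha)\big)}{\exp\big(-\theta q_1(t-\Delta)+(\alpha+\epsilon\hat\alpha)\big)+\exp\big(-\theta q_2(t-\Delta)+\alpha\big)} - \mu\,q_1(t),$$ $$\dot q_2(t) = \lambda\,\frac{\exp\big(-\theta q_2(t-\Delta)+\alpha\big)}{\exp\big(-\theta q_1(t-\Delta)+(\alpha+\epsilon\hat\alpha)\big)+\exp\big(-\theta q_2(t-\Delta)+\alpha\big)} - \mu\,q_2(t).$$ Let $\omega_{\mathrm{cr}}=\tfrac12\sqrt{\lambda^2\theta^2-4\mu^2}$ and $\Delta_{\mathrm{cr}}=\arccos\!\big(-\tfrac{2\mu}{\lambda\theta}\big)/\omega_{\mathrm{cr}}$. Then the critical delay $\Delta_{\mathrm{mod}}$ at which the stability of the system about its equilibrium changes satisfies $$\Delta_{\mathrm{mod}}=\Delta_{\mathrm{cr}}+\frac{4\mu^3+\mu^2\lambda^2\theta^2\Delta_{\mathrm{cr}}}{4\omega_{\mathrm{cr}}^2(\lambda\theta+2\mu)^2}\,\epsilon^2\hat\alpha^2+O(\epsilon^3).$$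
   Context: This is the asymmetric two-queue delayed-information fluid model in which only the preference parameter of the first queue is perturbed ($\alpha\mapsto\alpha+\epsilon\hat\alpha$); $\lambda$ is the arrival rate, $\mu$ the service rate, $\theta$ the sensitivity to queue length. $\Delta_{\mathrm{cr}}$ is the critical delay of the unperturbed symmetric system. ''Stability changes'' refers to the linearization about the equilibrium passing from asymptotically stable to unstable as $\Delta$ crosses $\Delta_{\mathrm{mod}}$. *)

From Stdlib Require Import Reals.
From Coquelicot Require Import Coquelicot.
Open Scope R_scope.

(* Arrival rate to queue 1 as a function of the delayed queue lengths y1 y2;
   preference of queue 1 is alpha + eps * ahat, of queue 2 is alpha. *)
Definition w1 (th al eps ah y1 : R) : R := exp (- th * y1 + (al + eps * ah)).
Definition w2 (th al y2 : R) : R := exp (- th * y2 + al).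

(* Vector field F(x, y): x = current state (q1(t), q2(t)),
   y = delayed state (q1(t-Delta), q2(t-Delta)). *)
Definition F1 (lam mu th al eps ah x1 x2 y1 y2 : R) : R :=
  lam * (w1 th al eps ah y1 / (w1 th al eps ah y1 + w2 th al y2)) - mu * x1.
Definition F2 (lam mu th al eps ah x1 x2 y1 y2 : R) : R :=
  lam * (w2 th al y2 / (w1 th al eps ah y1 + w2 th al y2)) - mu * x2.

Definition is_equilibrium (lam mu th al eps ah q1 q2 : R) : Prop :=
  F1 lam mu th al eps ah q1 q2 q1 q2 = 0 /\ F2 lam mu th al eps ah q1 q2 q1 q2 = 0.

Definition Fi (i : bool) := if i then F1 else F2.

(* Jacobian entries of the linearization about (q1,q2):
   A i j = dF_i / dx_j  (non-delayed),  B i j = dF_i / dy_j  (delayed). *)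
Definition Ajac (lam mu th al eps ah q1 q2 : R) (i j : bool) : R :=
  if j then Derive (fun x => Fi i lam mu th al eps ah x q2 q1 q2) q1
       else Derive (fun x => Fi i lam mu th al eps ah q1 x q1 q2) q2.
Definition Bjac (lam mu th al eps ah q1 q2 : R) (i j : bool) : R :=
  if j then Derive (fun y => Fi i lam mu th al eps ah q1 q2 y q2) q1
       else Derive (fun y => Fi i lam mu th al eps ah q1 q2 q1 y) q2.

Definition cexp (z : C) : C :=
  (exp (Re z) * cos (Im z), exp (Re z) * sin (Im z)).

(* Characteristic function of the linearized DDE
   u'(t) = A u(t) + B u(t - Delta):  det (z I - A - exp(-z Delta) B). *)
Definition char_fn (lam mu th al eps ah q1 q2 Delta : R) (z : C) : C :=
  let A := Ajac lam mu th al eps ah q1 q2 in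
  let B := Bjac lam mu th al eps ah q1 q2 in
  let e := cexp (Copp (Cmult z (RtoC Delta))) in
  let m i j := Cminus (if Bool.eqb i j then z else RtoC 0)
                      (Cplus (RtoC (A i j)) (Cmult e (RtoC (B i j)))) in
  Cminus (Cmult (m true true) (m false false)) (Cmult (m true false) (m false true)).

Definition lin_asympt_stable (lam mu th al eps ah q1 q2 Delta : R) : Prop :=
  forall z : C, char_fn lam mu th al eps ah q1 q2 Delta z = RtoC 0 -> Re z < 0.

Definition omega_cr (lam mu th : R) : R := sqrt (lam ^ 2 * th ^ 2 - 4 * mu ^ 2) / 2.
Definition Delta_cr (lam mu th : R) : R :=
  acos (- (2 * mu) / (lam * th)) / omega_cr lam mu th.

(* The characteristic function of the linearization about an equilibrium factors
   as (z + mu) (z + mu + k e^(-z Delta)), where k = (lam th / 2) (1 - s^2) and s is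
   the equilibrium imbalance P1 - P2 of the routing probabilities. For 0 < mu < k
   every root of the second factor has negative real part exactly when
   Delta < crit_delay mu k = (PI - atan (W / mu)) / W with W = sqrt (k^2 - mu^2),
   the delay at which a pair of roots reaches the imaginary axis; hence
   Dmod eps = crit_delay mu k(eps). The imbalance solves
   ln ((1 + s) / (1 - s)) = eps ah - (lam th / mu) s, so s = eps ah / (2 + lam th / mu)
   + O(eps^2), and a first-order Taylor expansion of crit_delay at k = lam th / 2
   gives the eps^2 coefficient. *)

From Stdlib Require Import Reals Lra Lia Classical.
From Coquelicot Require Import Coquelicot.
Open Scope R_scope.

Lemma pow_le_pow_le_1 x m n : 0 <= x <= 1 -> (m <= n)%nat -> x ^ n <= x ^ m.
Proof.
  intros Hx Hmn. replace n with (m + (n - m))%nat by lia. rewrite pow_add.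
  rewrite <- (Rmult_1_r (x ^ m)) at 2.
  apply Rmult_le_compat_l; [apply pow_le; lra|].
  rewrite <- (pow1 (n - m)). apply pow_incr. lra.
Qed.

Lemma exp_neg_le_1 t : 0 <= t -> exp (- t) <= 1.
Proof.
  intros Ht. rewrite <- exp_0. destruct (Req_dec t 0) as [->|Ht0].
  - rewrite Ropp_0. lra.
  - apply Rlt_le, exp_increasing. lra.
Qed.

Lemma cos_Rabs t : cos (Rabs t) = cos t.
Proof. unfold Rabs. destruct (Rcase_abs t); auto using cos_neg. Qed.

Lemma continuity_pt_ex_derive (f : R -> R) x : ex_derive f x -> continuity_pt f x.
Proof.
  intros H. apply continuity_pt_filterlim, (ex_derive_continuous (V := R_NormedModule)), H.
Qed.

Lemma IVT_interv_nonneg_neg f a b :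
  (forall t, a <= t <= b -> continuity_pt f t) -> a < b -> 0 <= f a -> f b < 0 ->
  exists c, a <= c <= b /\ f c = 0.
Proof.
  intros Hf Hab Ha Hb. destruct (Req_dec (f a) 0) as [E|E].
  { exists a. split; [lra| auto]. }
  destruct (Ranalysis5.IVT_interv (fun t => - f t) a b) as [c [Hc Hfc]]; try lra.
  - intros t Ht. apply continuity_pt_opp. auto.
  - exists c. split; auto. lra.
Qed.

(** * Functions that are O(|x|^n) at 0 *)

Definition bigO0 (f : R -> R) (n : nat) : Prop :=
  exists K d, 0 <= K /\ 0 < d /\ forall x, Rabs x < d -> Rabs (f x) <= K * Rabs x ^ n.

Lemma bigO0_ext f g n : (forall x, f x = g x) -> bigO0 f n -> bigO0 g n.
Proof.
  intros Efg [K [d [HK [Hd Hf]]]]. exists K, d. repeat split; auto.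
  intros x Hx. rewrite <- Efg. auto.
Qed.

Lemma bigO0_le f m n : (m <= n)%nat -> bigO0 f n -> bigO0 f m.
Proof.
  intros Hmn [K [d [HK [Hd Hf]]]]. exists K, (Rmin d 1). repeat split; auto.
  { apply Rmin_pos; lra. }
  intros x Hx. pose proof (Rmin_l d 1). pose proof (Rmin_r d 1).
  eapply Rle_trans; [apply Hf; lra|]. apply Rmult_le_compat_l; auto.
  apply pow_le_pow_le_1; auto. split; [apply Rabs_pos| lra].
Qed.

Lemma bigO0_plus f g n : bigO0 f n -> bigO0 g n -> bigO0 (fun x => f x + g x) n.
Proof.
  intros [Kf [df [HKf [Hdf Hf]]]] [Kg [dg [HKg [Hdg Hg]]]].
  exists (Kf + Kg), (Rmin df dg). repeat split; [lra| apply Rmin_pos; lra|].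
  intros x Hx. pose proof (Rmin_l df dg). pose proof (Rmin_r df dg).
  eapply Rle_trans; [apply Rabs_triang|].
  pose proof (Hf x ltac:(lra)). pose proof (Hg x ltac:(lra)). lra.
Qed.

Lemma bigO0_scal c f n : bigO0 f n -> bigO0 (fun x => c * f x) n.
Proof.
  intros [K [d [HK [Hd Hf]]]]. exists (Rabs c * K), d.
  repeat split; auto. { apply Rmult_le_pos; [apply Rabs_pos| auto]. }
  intros x Hx. rewrite Rabs_mult, Rmult_assoc.
  apply Rmult_le_compat_l; [apply Rabs_pos| auto].
Qed.

Lemma bigO0_mult f g m n : bigO0 f m -> bigO0 g n -> bigO0 (fun x => f x * g x) (m + n).
Proof.
  intros [Kf [df [HKf [Hdf Hf]]]] [Kg [dg [HKg [Hdg Hg]]]].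
  exists (Kf * Kg), (Rmin df dg). repeat split; [nra| apply Rmin_pos; lra|].
  intros x Hx. pose proof (Rmin_l df dg). pose proof (Rmin_r df dg).
  rewrite Rabs_mult, pow_add.
  replace (Kf * Kg * (Rabs x ^ m * Rabs x ^ n)) with ((Kf * Rabs x ^ m) * (Kg * Rabs x ^ n)) by ring.
  apply Rmult_le_compat; try apply Rabs_pos; [apply Hf| apply Hg]; lra.
Qed.

Lemma bigO0_small f n : (0 < n)%nat -> bigO0 f n ->
  forall r, 0 < r -> exists d, 0 < d /\ forall x, Rabs x < d -> Rabs (f x) < r.
Proof.
  intros Hn Hf r Hr. apply (bigO0_le f 1 n) in Hf; [|lia].
  destruct Hf as [K [d [HK [Hd Hf]]]].
  exists (Rmin d (r / (K + 1))). split.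
  { apply Rmin_pos; [lra| apply Rdiv_lt_0_compat; lra]. }
  intros x Hx. pose proof (Rmin_l d (r / (K + 1))). pose proof (Rmin_r d (r / (K + 1))).
  eapply Rle_lt_trans; [apply Hf; lra|]. rewrite pow_1.
  assert (Hxr : (K + 1) * Rabs x < r).
  { assert (Hx1 : Rabs x < r / (K + 1)) by lra.
    apply (Rmult_lt_compat_l (K + 1)) in Hx1; [|lra].
    replace ((K + 1) * (r / (K + 1))) with r in Hx1 by (field; lra). lra. }
  pose proof (Rabs_pos x). nra.
Qed.

Lemma bigO0_comp g f m n : (0 < m)%nat -> bigO0 g n -> bigO0 f m ->
  bigO0 (fun x => g (f x)) (m * n).
Proof.
  intros Hm [Kg [dg [HKg [Hdg Hg]]]] Hf.
  destruct (bigO0_small f m Hm Hf dg Hdg) as [d0 [Hd0 Hfs]].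
  destruct Hf as [Kf [df [HKf [Hdf Hf]]]].
  exists (Kg * Kf ^ n), (Rmin d0 df). repeat split.
  { apply Rmult_le_pos; [| apply pow_le]; auto. }
  { apply Rmin_pos; lra. }
  intros x Hx. pose proof (Rmin_l d0 df). pose proof (Rmin_r d0 df).
  eapply Rle_trans; [apply Hg, Hfs; lra|].
  rewrite pow_mult, Rmult_assoc, <- Rpow_mult_distr.
  apply Rmult_le_compat_l, pow_incr; auto. split; [apply Rabs_pos| apply Hf; lra].
Qed.

Lemma is_derive_bigO0 g x0 l : is_derive g x0 l -> bigO0 (fun h => g (x0 + h) - g x0) 1.
Proof.
  intros Hg. apply is_derive_Reals in Hg. destruct (Hg 1 Rlt_0_1) as [d Hd].
  exists (Rabs l + 1), d. repeat split; [pose proof (Rabs_pos l); lra| apply cond_pos|].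
  intros h Hh. rewrite pow_1. destruct (Req_dec h 0) as [->|Hh0].
  { rewrite Rplus_0_r, Rminus_diag, Rabs_R0. lra. }
  specialize (Hd h Hh0 Hh).
  replace (g (x0 + h) - g x0) with (((g (x0 + h) - g x0) / h - l) * h + l * h) by (field; auto).
  eapply Rle_trans; [apply Rabs_triang|]. rewrite !Rabs_mult.
  pose proof (Rabs_pos h). nra.
Qed.

(* The mean value theorem transfers the O(h) bound on f' - f' x0 to f. *)
Lemma taylor_bigO0 f f' x0 r l : 0 < r ->
  (forall x, Rabs (x - x0) < r -> is_derive f x (f' x)) -> is_derive f' x0 l ->
  bigO0 (fun h => f (x0 + h) - f x0 - f' x0 * h) 2.
Proof.
  intros Hr Hf Hl. destruct (is_derive_bigO0 f' x0 l Hl) as [K [d [HK [Hd Hf']]]].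
  exists K, (Rmin d r). repeat split; auto; [apply Rmin_pos; lra|].
  intros h Hh. pose proof (Rmin_l d r). pose proof (Rmin_r d r).
  set (g t := f t - f' x0 * t).
  assert (Hgder : forall t, Rabs (t - x0) <= Rabs h -> is_derive g t (f' t - f' x0)).
  { intros t Ht.
    assert (Hlin : is_derive (fun t => f' x0 * t) t (f' x0)) by (auto_derive; auto; ring).
    exact (is_derive_minus f _ t _ _ (Hf t ltac:(lra)) Hlin). }
  assert (Hbetween : forall t, Rmin x0 (x0 + h) <= t <= Rmax x0 (x0 + h) ->
                       Rabs (t - x0) <= Rabs h).
  { intros t Ht. replace (Rabs h) with (Rabs (x0 + h - x0)) by (f_equal; ring).
    apply Rabs_le_between_min_max. rewrite Rmin_comm, Rmax_comm. auto. }
  destruct (MVT_gen g x0 (x0 + h) (fun t => f' t - f' x0)) as [c [Hc Hgc]].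
  - intros t Ht. apply Hgder, Hbetween. lra.
  - intros t Ht. apply continuity_pt_ex_derive. eexists. apply Hgder, Hbetween, Ht.
  - unfold g in Hgc.
    replace (f (x0 + h) - f x0 - f' x0 * h) with ((f' c - f' x0) * h) by lra.
    pose proof (Hbetween c Hc) as Hcx.
    replace (f' c) with (f' (x0 + (c - x0))) by (f_equal; ring).
    pose proof (Hf' (c - x0) ltac:(lra)) as Hfc. rewrite pow_1 in Hfc.
    rewrite Rabs_mult.
    apply Rle_trans with (K * Rabs (c - x0) * Rabs h).
    + apply Rmult_le_compat_r; [apply Rabs_pos| auto].
    + replace (K * Rabs h ^ 2) with (K * Rabs h * Rabs h) by ring.
      apply Rmult_le_compat_r; [apply Rabs_pos|]. apply Rmult_le_compat_l; auto.
Qed.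

Lemma ln_ratio_bigO0 : bigO0 (fun s => ln (1 + s) - ln (1 - s) - 2 * s) 2.
Proof.
  apply (bigO0_ext (fun h => (ln (1 + (0 + h)) - ln (1 - (0 + h)) - 2 * (0 + h))
                             - (ln (1 + 0) - ln (1 - 0) - 2 * 0)
                             - (/ (1 + 0) + / (1 - 0) - 2) * h)).
  { intros s. rewrite Rplus_0_l, Rplus_0_r, Rminus_0_r, ln_1. field. }
  apply (taylor_bigO0 (fun s => ln (1 + s) - ln (1 - s) - 2 * s)
                      (fun s => / (1 + s) + / (1 - s) - 2) 0 (1 / 2) 0); [lra| |].
  - intros x Hx. apply Rabs_def2 in Hx.
    auto_derive; [repeat split; lra|]. field. lra.
  - auto_derive; [repeat split; lra|]. field.
Qed.

(** * The scalar characteristic equation z + mu + k e^(-z Delta) = 0 *)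

Definition char_scalar (mu k Delta : R) (z : C) : C :=
  Cplus (Cplus z (RtoC mu)) (Cmult (RtoC k) (cexp (Copp (Cmult z (RtoC Delta))))).

Lemma char_scalar_eq0 mu k Delta x y :
  char_scalar mu k Delta (x, y) = RtoC 0 <->
  x + mu + k * exp (- (x * Delta)) * cos (y * Delta) = 0 /\
  y - k * exp (- (x * Delta)) * sin (y * Delta) = 0.
Proof.
  unfold char_scalar, cexp, RtoC, Cplus, Cmult, Copp; simpl.
  replace (- (x * Delta - y * 0)) with (- (x * Delta)) by ring.
  replace (- (x * 0 + y * Delta)) with (- (y * Delta)) by ring.
  rewrite cos_neg, sin_neg. split.
  - intros H. injection H. intros. split; lra.
  - intros [H1 H2]. f_equal; lra.
Qed.

Lemma char_scalar_root_modulus mu k Delta x y :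
  char_scalar mu k Delta (x, y) = RtoC 0 ->
  (x + mu) ^ 2 + y ^ 2 = (k * exp (- (x * Delta))) ^ 2.
Proof.
  intros [E1 E2]%char_scalar_eq0.
  replace (x + mu) with (- (k * exp (- (x * Delta)) * cos (y * Delta))) by lra.
  replace y with (k * exp (- (x * Delta)) * sin (y * Delta)) at 2 by lra.
  pose proof (sin2_cos2 (y * Delta)) as H. rewrite !Rsqr_pow2 in H.
  replace ((k * exp (- (x * Delta))) ^ 2) with ((k * exp (- (x * Delta))) ^ 2 * 1) by ring.
  rewrite <- H. ring.
Qed.

Lemma char_scalar_root_of_polar mu k Delta x y :
  0 < x + mu -> 0 <= y -> (x + mu) ^ 2 + y ^ 2 = (k * exp (- (x * Delta))) ^ 2 ->
  0 < k -> y * Delta = PI - atan (y / (x + mu)) ->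
  char_scalar mu k Delta (x, y) = RtoC 0.
Proof.
  intros Hx Hy Hmod Hk Hang.
  set (r := k * exp (- (x * Delta))) in *.
  assert (Hr : 0 < r) by (apply Rmult_lt_0_compat; [lra| apply exp_pos]).
  assert (Hsq : sqrt (1 + (y / (x + mu))²) = r / (x + mu)).
  { rewrite <- (sqrt_Rsqr (r / (x + mu))); [| apply Rlt_le, Rdiv_lt_0_compat; auto].
    f_equal. replace (1 + (y / (x + mu))²) with (((x + mu) ^ 2 + y ^ 2) / (x + mu) ^ 2)
      by (unfold Rsqr; field; lra).
    rewrite Hmod. unfold Rsqr. field. lra. }
  apply char_scalar_eq0. fold r. rewrite Hang.
  rewrite Rtrigo_facts.cos_pi_minus, cos_atan, Rtrigo_facts.sin_pi_minus, sin_atan, Hsq.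
  split; field; lra.
Qed.

Definition crit_freq (mu k : R) : R := sqrt (k ^ 2 - mu ^ 2).
Definition crit_angle (mu k : R) : R := PI - atan (crit_freq mu k / mu).
Definition crit_delay (mu k : R) : R := crit_angle mu k / crit_freq mu k.

Section ScalarCharacteristicEquation.

Variables mu k : R.
Hypothesis Hmuk : 0 < mu < k.

Lemma crit_freq_pos : 0 < crit_freq mu k.
Proof. apply sqrt_lt_R0. nra. Qed.

Lemma crit_freq_sq : crit_freq mu k ^ 2 = k ^ 2 - mu ^ 2.
Proof. unfold crit_freq. rewrite <- Rsqr_pow2, Rsqr_sqrt; [ring| nra]. Qed.

Lemma crit_angle_bounds : PI / 2 < crit_angle mu k < PI.
Proof.
  pose proof crit_freq_pos. pose proof (atan_bound (crit_freq mu k / mu)).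
  assert (0 < atan (crit_freq mu k / mu)).
  { rewrite <- atan_0. apply atan_increasing, Rdiv_lt_0_compat; lra. }
  unfold crit_angle. lra.
Qed.

Lemma cos_crit_angle : cos (crit_angle mu k) = - mu / k.
Proof.
  pose proof crit_freq_sq as HW2.
  unfold crit_angle. rewrite Rtrigo_facts.cos_pi_minus, cos_atan.
  replace (1 + (crit_freq mu k / mu)²) with (k / mu)².
  - rewrite sqrt_Rsqr; [field; lra| apply Rlt_le, Rdiv_lt_0_compat; lra].
  - replace ((crit_freq mu k / mu)²) with (crit_freq mu k ^ 2 / mu ^ 2)
      by (unfold Rsqr; field; lra).
    rewrite HW2. unfold Rsqr. field. lra.
Qed.

Lemma crit_delay_pos : 0 < crit_delay mu k.
Proof.
  pose proof crit_freq_pos. pose proof crit_angle_bounds. pose proof PI_RGT_0.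
  apply Rdiv_lt_0_compat; lra.
Qed.

Lemma lt_crit_delay Delta : Delta < crit_delay mu k <-> Delta * crit_freq mu k < crit_angle mu k.
Proof.
  pose proof crit_freq_pos. unfold crit_delay.
  split; intros H'.
  - apply (Rmult_lt_compat_r (crit_freq mu k)) in H'; auto.
    unfold Rdiv in H'. rewrite Rmult_assoc, Rinv_l in H'; lra.
  - apply (Rmult_lt_reg_r (crit_freq mu k)); auto.
    unfold Rdiv. rewrite Rmult_assoc, Rinv_l; lra.
Qed.

(* A root in the closed right half-plane has |Im z| <= crit_freq, so for
   Delta below crit_delay its phase |Im z| Delta stays below crit_angle,
   where k cos exceeds -mu: the real part of the equation cannot vanish. *)
Lemma char_scalar_roots_stable Delta z :
  0 < Delta -> Delta < crit_delay mu k ->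
  char_scalar mu k Delta z = RtoC 0 -> Re z < 0.
Proof.
  intros HD HDcr Hz. destruct z as [x y]. simpl.
  destruct (Rlt_or_le x 0) as [|Hx]; auto. exfalso.
  pose proof (char_scalar_root_modulus _ _ _ _ _ Hz) as Hmod.
  apply char_scalar_eq0 in Hz as [E _].
  set (e := exp (- (x * Delta))) in *.
  assert (He : 0 < e <= 1).
  { split; [apply exp_pos| apply exp_neg_le_1; nra]. }
  assert (Hy : Rabs y <= crit_freq mu k).
  { pose proof crit_freq_pos. rewrite <- (Rabs_pos_eq (crit_freq mu k)) by lra.
    apply Rsqr_le_abs_0. rewrite !Rsqr_pow2, crit_freq_sq.
    assert (e ^ 2 <= 1) by nra.
    assert ((k * e) ^ 2 <= k ^ 2) by (rewrite Rpow_mult_distr; nra).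
    assert (mu ^ 2 <= (x + mu) ^ 2) by nra.
    lra. }
  assert (Hphase : Rabs y * Delta < crit_angle mu k).
  { apply lt_crit_delay in HDcr. nra. }
  assert (Hcos : - mu / k < cos (y * Delta)).
  { rewrite <- cos_crit_angle, <- (cos_Rabs (y * Delta)), Rabs_mult, (Rabs_pos_eq Delta) by lra.
    pose proof crit_angle_bounds. pose proof (Rabs_pos y).
    apply cos_decreasing_1; nra. }
  assert (Hkcos : - mu < k * cos (y * Delta)).
  { apply (Rmult_lt_compat_l k) in Hcos; [| lra].
    replace (k * (- mu / k)) with (- mu) in Hcos by (field; lra). lra. }
  destruct (Rlt_or_le (cos (y * Delta)) 0); nra.
Qed.

Lemma real_crossing Delta : 0 < Delta ->
  exists xs, 0 < xs /\ xs + mu = k * exp (- (xs * Delta)).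
Proof.
  intros HD.
  destruct (IVT (fun x => x + mu - k * exp (- (x * Delta))) 0 k) as [xs [Hxs Hh]].
  - intros x. apply continuity_pt_ex_derive. auto_derive. auto.
  - lra.
  - rewrite Rmult_0_l, Ropp_0, exp_0. lra.
  - pose proof (exp_neg_le_1 (k * Delta)). pose proof (exp_pos (- (k * Delta))). nra.
  - exists xs. split; [| lra].
    destruct (Req_dec xs 0) as [E|E]; [| lra].
    rewrite E, Rmult_0_l, Ropp_0, exp_0 in Hh. lra.
Qed.

(* For x in [0, xs], z = x + i S x is the point of the upper half-plane with
   |z + mu| = k e^(-x Delta); the remaining phase condition G x = 0 is met
   somewhere since G 0 >= 0 (as Delta >= crit_delay) and G xs = -PI. *)
Lemma char_scalar_root_unstable Delta : 0 < Delta -> crit_delay mu k <= Delta ->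
  exists z, char_scalar mu k Delta z = RtoC 0 /\ 0 <= Re z.
Proof.
  intros HD HDcr. destruct (real_crossing Delta HD) as [xs [Hxs Hcross]].
  set (r x := k * exp (- (x * Delta))).
  set (S x := sqrt (r x ^ 2 - (x + mu) ^ 2)).
  set (G x := Delta * S x - PI + atan (S x / (x + mu))).
  assert (Hbelow : forall x, 0 <= x <= xs -> 0 <= r x ^ 2 - (x + mu) ^ 2).
  { intros x Hx. enough (x + mu <= r x) by nra.
    enough (exp (- (xs * Delta)) <= exp (- (x * Delta))) by (unfold r; nra).
    destruct (Req_dec x xs) as [->|]; [lra|]. apply Rlt_le, exp_increasing. nra. }
  assert (HG0 : 0 <= G 0).
  { assert (HS0 : S 0 = crit_freq mu k).
    { unfold S, r, crit_freq. rewrite Rmult_0_l, Ropp_0, exp_0, Rmult_1_r, Rplus_0_l. auto. }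
    unfold G. rewrite HS0, Rplus_0_l.
    assert (~ Delta < crit_delay mu k) as Hn by lra. rewrite lt_crit_delay in Hn.
    unfold crit_angle in Hn. lra. }
  assert (HGxs : G xs = - PI).
  { unfold G, S. replace (r xs) with (xs + mu) by (unfold r; lra).
    rewrite Rminus_diag, sqrt_0. unfold Rdiv. rewrite Rmult_0_l, atan_0. ring. }
  assert (HGcont : forall x, 0 <= x <= xs -> continuity_pt G x).
  { intros x Hx. apply continuity_pt_filterlim.
    assert (HScont : continuous S x).
    { apply continuous_sqrt_comp, (ex_derive_continuous (V := R_NormedModule)).
      unfold r. auto_derive. auto. }
    apply (continuous_plus (fun x => Delta * S x - PI)).
    - apply (continuous_minus (fun x => Delta * S x)); [| apply continuous_const].
      apply (continuous_mult (fun _ => Delta)); auto using continuous_const.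
    - apply continuous_atan_comp, (continuous_mult S); auto.
      apply (ex_derive_continuous (V := R_NormedModule) (fun x => / (x + mu))).
      auto_derive. lra. }
  destruct (IVT_interv_nonneg_neg G 0 xs) as [x0 [Hx0 HGx0]]; auto.
  { rewrite HGxs. pose proof PI_RGT_0. lra. }
  exists (x0, S x0). split; [| simpl; lra].
  apply char_scalar_root_of_polar; try lra.
  - apply sqrt_pos.
  - unfold S. rewrite <- Rsqr_pow2 with (x := sqrt _), Rsqr_sqrt by auto. fold (r x0). ring.
  - unfold G in HGx0. lra.
Qed.

Lemma char_scalar_stable_iff Delta : 0 < Delta ->
  (forall z, char_scalar mu k Delta z = RtoC 0 -> Re z < 0) <-> Delta < crit_delay mu k.
Proof.
  intros HD. split.
  - intros Hstab. destruct (Rlt_or_le Delta (crit_delay mu k)) as [|HDcr]; auto.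
    destruct (char_scalar_root_unstable Delta HD HDcr) as [z [Hz Hre]].
    specialize (Hstab z Hz). lra.
  - intros HDcr z. apply char_scalar_roots_stable; auto.
Qed.

End ScalarCharacteristicEquation.

(** * Linearization about an equilibrium *)

Definition delayed_gain (lam th al eps ah q1 q2 : R) : R :=
  lam * th * w1 th al eps ah q1 * w2 th al q2 / (w1 th al eps ah q1 + w2 th al q2) ^ 2.

Lemma Ajac_eq lam mu th al eps ah q1 q2 i j :
  Ajac lam mu th al eps ah q1 q2 i j = if Bool.eqb i j then - mu else 0.
Proof.
  destruct i, j; unfold Ajac, Fi, F1, F2; simpl;
    apply is_derive_unique; auto_derive; auto; ring.
Qed.

Lemma Bjac_eq lam mu th al eps ah q1 q2 i j :
  Bjac lam mu th al eps ah q1 q2 i j =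
  (if Bool.eqb i j then -1 else 1) * delayed_gain lam th al eps ah q1 q2.
Proof.
  pose proof (exp_pos (- th * q1 + (al + eps * ah))).
  pose proof (exp_pos (- th * q2 + al)).
  destruct i, j; unfold Bjac, Fi, F1, F2, delayed_gain, w1, w2 in *; simpl;
    apply is_derive_unique; auto_derive; try lra; field; lra.
Qed.

Lemma char_fn_factor lam mu th al eps ah q1 q2 Delta z :
  char_fn lam mu th al eps ah q1 q2 Delta z =
  Cmult (Cplus z (RtoC mu))
        (char_scalar mu (2 * delayed_gain lam th al eps ah q1 q2) Delta z).
Proof.
  unfold char_fn, char_scalar. cbv zeta. rewrite !Ajac_eq, !Bjac_eq. simpl.
  set (e := cexp (Copp (Cmult z (RtoC Delta)))).
  destruct z as [x y], e as [e1 e2].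
  unfold Cminus, Cplus, Cmult, Copp, RtoC; simpl. f_equal; ring.
Qed.

Lemma lin_asympt_stable_iff lam mu th al eps ah q1 q2 Delta :
  0 < mu < 2 * delayed_gain lam th al eps ah q1 q2 -> 0 < Delta ->
  lin_asympt_stable lam mu th al eps ah q1 q2 Delta <->
  Delta < crit_delay mu (2 * delayed_gain lam th al eps ah q1 q2).
Proof.
  intros Hk HD. rewrite <- char_scalar_stable_iff by auto.
  unfold lin_asympt_stable. setoid_rewrite char_fn_factor.
  split; intros Hstab z Hz.
  - apply Hstab. rewrite Hz. apply Cmult_0_r.
  - destruct (classic (Cplus z (RtoC mu) = RtoC 0)) as [Hmu|Hmu].
    + destruct z as [x y]. injection Hmu. simpl. lra.
    + destruct (classic (char_scalar mu (2 * delayed_gain lam th al eps ah q1 q2) Delta z = RtoC 0))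
        as [Hc|Hc]; auto.
      exfalso. exact (Cmult_neq_0 _ _ Hmu Hc Hz).
Qed.

(** * Equilibria *)

(* At equilibrium the difference s = P1 - P2 of the routing probabilities
   satisfies (1 + s) / (1 - s) = exp (c - a s), with a = lam th / mu and c = eps ah. *)
Definition imbalance_eq (a c s : R) : R := (1 + s) - (1 - s) * exp (- (a * s) + c).

Definition imbalance_sig (a c : R) : {s | -1 <= s <= 1 /\ imbalance_eq a c s = 0}.
Proof.
  apply IVT.
  - intros x. apply continuity_pt_ex_derive. unfold imbalance_eq. auto_derive. auto.
  - lra.
  - unfold imbalance_eq. pose proof (exp_pos (- (a * -1) + c)). lra.
  - unfold imbalance_eq. pose proof (exp_pos (- (a * 1) + c)). lra.
Defined.

Definition imbalance (a c : R) : R := proj1_sig (imbalance_sig a c).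

Lemma imbalance_spec a c : -1 < imbalance a c < 1 /\ imbalance_eq a c (imbalance a c) = 0.
Proof.
  unfold imbalance. destruct (imbalance_sig a c) as [s [Hs Hp]]. simpl.
  unfold imbalance_eq in *. pose proof (exp_pos (- (a * s) + c)).
  split; auto. split.
  - destruct (Req_dec s (-1)) as [->|]; lra.
  - destruct (Req_dec s 1) as [->|]; lra.
Qed.

Lemma imbalance_eq_increasing a c s t : 0 < a -> s < t -> t <= 1 ->
  imbalance_eq a c s < imbalance_eq a c t.
Proof.
  intros Ha Hst Ht. unfold imbalance_eq.
  assert (exp (- (a * t) + c) < exp (- (a * s) + c)) by (apply exp_increasing; nra).
  pose proof (exp_pos (- (a * t) + c)). nra.
Qed.

Lemma imbalance_unique a c s : 0 < a -> -1 <= s <= 1 -> imbalance_eq a c s = 0 ->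
  s = imbalance a c.
Proof.
  intros Ha Hs Hp. destruct (imbalance_spec a c) as [Hb Hbp].
  destruct (Rtotal_order s (imbalance a c)) as [H|[H|H]]; auto.
  - pose proof (imbalance_eq_increasing a c _ _ Ha H ltac:(lra)). lra.
  - pose proof (imbalance_eq_increasing a c _ _ Ha H ltac:(lra)). lra.
Qed.

Lemma imbalance_ln a c :
  ln (1 + imbalance a c) - ln (1 - imbalance a c) = c - a * imbalance a c.
Proof.
  destruct (imbalance_spec a c) as [Hs Hp]. set (s := imbalance a c) in *.
  unfold imbalance_eq in Hp.
  replace (1 + s) with ((1 - s) * exp (- (a * s) + c)) by lra.
  rewrite ln_mult, ln_exp by (lra || apply exp_pos). ring.
Qed.

Lemma imbalance_bound a c : 0 < a -> Rabs (imbalance a c) <= Rabs c / a.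
Proof.
  intros Ha. destruct (imbalance_spec a c) as [Hs Hp]. set (s := imbalance a c) in *.
  unfold imbalance_eq in Hp. pose proof (exp_pos (- (a * s) + c)).
  apply (Rmult_le_reg_l a); auto. replace (a * (Rabs c / a)) with (Rabs c) by (field; lra).
  destruct (Rle_or_lt (a * Rabs s) (Rabs c)) as [|Hgt]; auto. exfalso.
  revert Hgt. unfold Rabs; destruct (Rcase_abs s), (Rcase_abs c); intros Hgt.
  1, 2: assert (1 < exp (- (a * s) + c)) by (rewrite <- exp_0; apply exp_increasing; nra); nra.
  all: assert (exp (- (a * s) + c) < 1) by (rewrite <- exp_0; apply exp_increasing; nra); nra.
Qed.

Lemma w1_w2 th al eps ah q1 q2 :
  w1 th al eps ah q1 = w2 th al q2 * exp (- (th * (q1 - q2)) + eps * ah).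
Proof. unfold w1, w2. rewrite <- exp_plus. f_equal. ring. Qed.

Lemma equilibrium_delayed_gain lam mu th al eps ah q1 q2 :
  0 < lam -> 0 < mu -> 0 < th -> is_equilibrium lam mu th al eps ah q1 q2 ->
  2 * delayed_gain lam th al eps ah q1 q2 =
  lam * th / 2 * (1 - imbalance (lam * th / mu) (eps * ah) ^ 2).
Proof.
  intros Hl Hm Ht [E1 E2]. unfold F1, F2 in E1, E2.
  pose proof (exp_pos (- th * q1 + (al + eps * ah))) as Hv1.
  pose proof (exp_pos (- th * q2 + al)) as Hv2.
  pose proof (w1_w2 th al eps ah q1 q2) as Hw.
  unfold delayed_gain. unfold w1, w2 in *.
  set (v1 := exp (- th * q1 + (al + eps * ah))) in *.
  set (v2 := exp (- th * q2 + al)) in *.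
  set (P := v1 / (v1 + v2)) in *.
  assert (HP : 0 < P < 1).
  { unfold P. split; [apply Rdiv_lt_0_compat; lra|].
    apply (Rmult_lt_reg_r (v1 + v2)); [lra|]. unfold Rdiv. rewrite Rmult_assoc, Rinv_l; lra. }
  assert (HQ : v2 / (v1 + v2) = 1 - P) by (unfold P; field; lra).
  rewrite HQ in E2.
  assert (Hq12 : th * (q1 - q2) = lam * th / mu * (2 * P - 1))
    by (apply (Rmult_eq_reg_l mu); [| lra]; field_simplify; nra).
  assert (Hs : 2 * P - 1 = imbalance (lam * th / mu) (eps * ah)).
  { apply imbalance_unique; [apply Rdiv_lt_0_compat; nra| lra|].
    unfold imbalance_eq. rewrite <- Hq12.
    replace (exp (- (th * (q1 - q2)) + eps * ah)) with (v1 / v2) by (rewrite Hw; field; lra).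
    unfold P. field. lra. }
  rewrite <- Hs.
  replace (lam * th * v1 * v2 / (v1 + v2) ^ 2) with (lam * th * P * (1 - P))
    by (rewrite <- HQ; unfold P; field; lra).
  field.
Qed.

Lemma equilibrium_exists lam mu th al eps ah : 0 < mu ->
  is_equilibrium lam mu th al eps ah
    (lam * (1 + imbalance (lam * th / mu) (eps * ah)) / (2 * mu))
    (lam * (1 - imbalance (lam * th / mu) (eps * ah)) / (2 * mu)).
Proof.
  intros Hm. set (a := lam * th / mu). set (c := eps * ah).
  destruct (imbalance_spec a c) as [Hs Hp]. set (s := imbalance a c) in *.
  unfold imbalance_eq in Hp.
  set (E := exp (- (a * s) + c)) in *. pose proof (exp_pos (- (a * s) + c)) as HE.
  set (q1 := lam * (1 + s) / (2 * mu)). set (q2 := lam * (1 - s) / (2 * mu)).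
  assert (Hw : w1 th al eps ah q1 = w2 th al q2 * E).
  { rewrite (w1_w2 th al eps ah q1 q2). unfold E, q1, q2, a, c. do 3 f_equal. field. lra. }
  pose proof (exp_pos (- th * q2 + al)) as Hv2. fold (w2 th al q2) in Hv2.
  unfold is_equilibrium, F1, F2. rewrite Hw.
  set (v2 := w2 th al q2) in *.
  assert (HsE : (1 - s) * (E + 1) = 2) by lra.
  replace (v2 * E / (v2 * E + v2)) with ((1 + s) / 2)
    by (field_simplify_eq; [nra | nra]).
  replace (v2 / (v2 * E + v2)) with ((1 - s) / 2) by (field_simplify_eq; [nra | nra]).
  unfold q1, q2. split; field; lra.
Qed.

(** * Expansion of the critical delay *)

Definition crit_delay_deriv (mu k : R) : R :=
  - (mu / k + crit_delay mu k * k) / (k ^ 2 - mu ^ 2).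

Lemma is_derive_crit_delay mu k : 0 < mu < k ->
  is_derive (crit_delay mu) k (crit_delay_deriv mu k).
Proof.
  intros Hmuk. pose proof (crit_freq_pos mu k Hmuk) as HW.
  pose proof (crit_freq_sq mu k Hmuk) as HW2.
  unfold crit_delay_deriv, crit_delay, crit_angle, crit_freq in *.
  auto_derive;
    replace (k * (k * 1) + - (mu * (mu * 1))) with (k ^ 2 - mu ^ 2) by ring;
    set (W := sqrt (k ^ 2 - mu ^ 2)) in *; [repeat split; nra|].
  rewrite <- HW2.
  replace (1 + W * / mu * (W * / mu * 1)) with (k ^ 2 / mu ^ 2)
    by (replace (k ^ 2) with (W ^ 2 + mu ^ 2) by lra; field; lra).
  unfold Rdiv. field. repeat split; lra.
Qed.

Lemma crit_delay_bigO0 mu k0 : 0 < mu < k0 ->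
  bigO0 (fun h => crit_delay mu (k0 + h) - crit_delay mu k0 - crit_delay_deriv mu k0 * h) 2.
Proof.
  intros Hmuk.
  assert (Hderiv2 : ex_derive (crit_delay_deriv mu) k0).
  { unfold crit_delay_deriv. auto_derive. repeat split; try nra.
    exists (crit_delay_deriv mu k0). apply is_derive_crit_delay; auto. }
  destruct Hderiv2 as [l Hl].
  apply (taylor_bigO0 _ _ k0 (k0 - mu) l); [lra| |auto].
  intros k Hk. apply Rabs_def2 in Hk. apply is_derive_crit_delay. lra.
Qed.

Lemma imbalance_bigO0 a ah : 0 < a -> bigO0 (fun eps => imbalance a (eps * ah)) 1.
Proof.
  intros Ha. exists (Rabs ah / a), 1. repeat split; [| lra|].
  { apply Rdiv_le_0_compat; [apply Rabs_pos| auto]. }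
  intros eps _. rewrite pow_1.
  replace (Rabs ah / a * Rabs eps) with (Rabs (eps * ah) / a) by (rewrite Rabs_mult; field; lra).
  apply imbalance_bound; auto.
Qed.

(* The linear part of s = imbalance a (eps ah) is eps ah / (2 + a), because
   ln((1+s)/(1-s)) = 2 s + O(s^2) turns the defining equation into
   (2 + a) s = eps ah + O(eps^2). *)
Lemma imbalance_sq_bigO0 a ah : 0 < a ->
  bigO0 (fun eps => imbalance a (eps * ah) ^ 2 - (ah / (2 + a)) ^ 2 * eps ^ 2) 3.
Proof.
  intros Ha. set (s eps := imbalance a (eps * ah)). set (b := ah / (2 + a)).
  pose proof (imbalance_bigO0 a ah Ha) as Hs.
  assert (Hdiff : bigO0 (fun eps => s eps - b * eps) 2).
  { apply (bigO0_ext (fun eps => (- / (2 + a)) * (ln (1 + s eps) - ln (1 - s eps) - 2 * s eps))).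
    { intros eps. unfold s. rewrite imbalance_ln. unfold b. field. lra. }
    apply bigO0_scal, (bigO0_comp (fun s => ln (1 + s) - ln (1 - s) - 2 * s) s 1 2);
      auto using ln_ratio_bigO0. }
  assert (Hsum : bigO0 (fun eps => s eps + b * eps) 1).
  { apply (bigO0_ext (fun eps => 2 * s eps + (-1) * (s eps - b * eps))); [intros x; unfold s; ring|].
    apply bigO0_plus, bigO0_scal; [apply bigO0_scal; auto|].
    apply (bigO0_le _ 1 2); auto. }
  apply (bigO0_ext (fun eps => (s eps - b * eps) * (s eps + b * eps))); [intros x; unfold s; ring|].
  apply (bigO0_mult _ _ 2 1); auto.
Qed.

Definition crit_delay_coef2 (mu k0 a : R) : R := - crit_delay_deriv mu k0 * k0 / (2 + a) ^ 2.

Lemma crit_delay_imbalance_bigO0 mu k0 a ah : 0 < mu < k0 -> 0 < a ->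
  bigO0 (fun eps => crit_delay mu (k0 * (1 - imbalance a (eps * ah) ^ 2)) - crit_delay mu k0
                    - crit_delay_coef2 mu k0 a * eps ^ 2 * ah ^ 2) 3.
Proof.
  intros Hmuk Ha. set (s eps := imbalance a (eps * ah)). set (b := ah / (2 + a)).
  set (E := crit_delay_deriv mu k0).
  pose proof (imbalance_bigO0 a ah Ha) as Hs.
  assert (Hh : bigO0 (fun eps => - k0 * s eps ^ 2) 2).
  { apply bigO0_scal. apply (bigO0_ext (fun eps => s eps * s eps)); [intros x; unfold s; ring|].
    apply (bigO0_mult _ _ 1 1); auto. }
  assert (Htaylor : bigO0 (fun eps => crit_delay mu (k0 + - k0 * s eps ^ 2) - crit_delay mu k0
                                      - E * (- k0 * s eps ^ 2)) 3).
  { apply (bigO0_le _ 3 (2 * 2)); [lia|].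
    apply (bigO0_comp (fun h => crit_delay mu (k0 + h) - crit_delay mu k0 - E * h)); auto.
    apply crit_delay_bigO0; auto. }
  apply (bigO0_ext (fun eps => (crit_delay mu (k0 + - k0 * s eps ^ 2) - crit_delay mu k0
                                - E * (- k0 * s eps ^ 2))
                               + (- E * k0) * (s eps ^ 2 - b ^ 2 * eps ^ 2))).
  { intros eps. unfold s. replace (k0 * (1 - imbalance a (eps * ah) ^ 2))
      with (k0 + - k0 * imbalance a (eps * ah) ^ 2) by ring.
    unfold crit_delay_coef2, b. fold E. field. lra. }
  apply bigO0_plus; auto. apply bigO0_scal, imbalance_sq_bigO0; auto.
Qed.

Lemma omega_cr_eq lam mu th : omega_cr lam mu th = crit_freq mu (lam * th / 2).
Proof.
  unfold omega_cr, crit_freq.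
  replace ((lam * th / 2) ^ 2 - mu ^ 2) with ((lam ^ 2 * th ^ 2 - 4 * mu ^ 2) / 2 ^ 2) by field.
  rewrite sqrt_div_alt, sqrt_pow2; lra.
Qed.

Lemma Delta_cr_eq lam mu th : 0 < mu < lam * th / 2 ->
  Delta_cr lam mu th = crit_delay mu (lam * th / 2).
Proof.
  intros Hmuk. unfold Delta_cr, crit_delay. rewrite omega_cr_eq. f_equal.
  replace (- (2 * mu) / (lam * th)) with (cos (crit_angle mu (lam * th / 2)))
    by (rewrite cos_crit_angle by auto; field; split; intros ->; lra).
  pose proof (crit_angle_bounds mu _ Hmuk). pose proof PI_RGT_0.
  apply acos_cos. lra.
Qed.

Lemma crit_delay_coef2_eq lam mu th : 0 < mu < lam * th / 2 ->
  (4 * mu ^ 3 + mu ^ 2 * lam ^ 2 * th ^ 2 * Delta_cr lam mu th)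
    / (4 * omega_cr lam mu th ^ 2 * (lam * th + 2 * mu) ^ 2)
  = crit_delay_coef2 mu (lam * th / 2) (lam * th / mu).
Proof.
  intros Hmuk. rewrite Delta_cr_eq, omega_cr_eq, crit_freq_sq by auto.
  unfold crit_delay_coef2, crit_delay_deriv. field. repeat split; nra.
Qed.

Theorem mainTheorem2 (lam mu th al ah : R) :
  0 < lam -> 0 < mu -> 0 < th -> lam * th > 2 * mu ->
  exists (Dmod : R -> R) (eps0 K : R), 0 < eps0 /\
    (forall eps, Rabs eps < eps0 ->
       0 < Dmod eps /\
       (exists q1 q2, is_equilibrium lam mu th al eps ah q1 q2) /\
       (forall q1 q2, is_equilibrium lam mu th al eps ah q1 q2 ->
          forall Delta, 0 < Delta ->
            (lin_asympt_stable lam mu th al eps ah q1 q2 Delta <-> Delta < Dmod eps)) /\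
       Rabs (Dmod eps - Delta_cr lam mu th
             - (4 * mu ^ 3 + mu ^ 2 * lam ^ 2 * th ^ 2 * Delta_cr lam mu th)
               / (4 * omega_cr lam mu th ^ 2 * (lam * th + 2 * mu) ^ 2)
               * eps ^ 2 * ah ^ 2)
         <= K * Rabs eps ^ 3).
Proof.
  intros Hlam Hmu Hth Hcr.
  set (k0 := lam * th / 2). set (a := lam * th / mu).
  set (s eps := imbalance a (eps * ah)).
  assert (Hk0 : 0 < mu < k0) by (unfold k0; lra).
  assert (Ha : 0 < a) by (apply Rdiv_lt_0_compat; nra).
  destruct (crit_delay_imbalance_bigO0 mu k0 a ah Hk0 Ha) as [K [d [_ [Hd Hexp]]]].
  assert (Hgain : bigO0 (fun eps => k0 * (s eps * s eps)) 2).
  { apply bigO0_scal, (bigO0_mult _ _ 1 1); apply imbalance_bigO0; auto. }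
  destruct (bigO0_small _ 2 ltac:(lia) Hgain (k0 - mu)) as [d' [Hd' Hsmall]]; [lra|].
  exists (fun eps => crit_delay mu (k0 * (1 - s eps ^ 2))), (Rmin d d'), K.
  split; [apply Rmin_pos; auto|]. intros eps Heps.
  pose proof (Rmin_l d d'). pose proof (Rmin_r d d').
  assert (Hk : 0 < mu < k0 * (1 - s eps ^ 2)).
  { specialize (Hsmall eps ltac:(lra)). apply Rabs_def2 in Hsmall. simpl. lra. }
  split; [| split; [| split]].
  - apply crit_delay_pos; auto.
  - eexists _, _. apply equilibrium_exists; auto.
  - intros q1 q2 Hq Delta HD.
    pose proof (equilibrium_delayed_gain _ _ _ _ _ _ _ _ Hlam Hmu Hth Hq) as Hgain_eq.
    rewrite lin_asympt_stable_iff, Hgain_eq; [reflexivity| rewrite Hgain_eq; auto| auto].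
  - rewrite (crit_delay_coef2_eq lam mu th Hk0), (Delta_cr_eq lam mu th Hk0).
    apply Hexp. lra.
Qed.
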